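(* Let $n\ge1$ and let $\delta$ be a dependent variable of $\mathsf{Q}$. Let $\mathcal T$ consist of the two formulas $(\delta,1)\leftrightarrow(\phi_1,1)\land\dots\land(\phi_n,1)$ and $(\delta,0)\leftrightarrow(\phi_1,0)\land\dots\land(\phi_n,0)$. Then every evaluation satisfying $\mathcal T$ has $\delta^+=\{(1,\dots,1)\}$ and $\delta^-=\{(0,\dots,0)\}$; for such an evaluation, $\delta$ holds at each world $w=(c_1,\dots,c_n)\in W$ to the degree $\frac1n(c_1+\dots+c_n)$; consequently, for all $c_1,\dots,c_n\in[0,1]$, $\mathcal T$ entails $(\phi_1,c_1)\land\dots\land(\phi_n,c_n)\to\big(\delta,\tfrac{c_1+\dots+c_n}{n}\big)$.
   Context: The logic $\mathsf{Q}$: fix $n\ge1$, basic variables $\phi_1,\dots,\phi_n$ and countably many dependent variables $\alpha_1,\alpha_2,\dots$. A graded variable is a pair $(\alpha,c)$ with $\alpha$ a variable and $c\in[0,1]$. Formulas are built from graded variables by classical $\land,\lor,\lnot$; $\Phi\to\Psi$ abbreviates $\lnot\Phi\lor\Psi$ and $\leftrightarrow$ is the usual biconditional. The set of worlds is $W=[0,1]^n$ with metric $d((c_1,\dots,c_n),(d_1,\dots,d_n))=\sum_i|c_i-d_i|$, and $d(w,A)=\inf_{a\in A}d(w,a)$ for $A\subseteq W$. An evaluation assigns to each variable $\alpha$ a pair $(\alpha^+,\alpha^-)$ of disjoint nonempty closed subsets of $W$, with $\phi_i^+=\{(a_1,\dots,a_n):a_i=1\}$ and $\phi_i^-=\{(a_1,\dots,a_n):a_i=0\}$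 for each basic variable. At $w\in W$, $\alpha$ holds to the degree $\frac{d(w,\alpha^-)}{d(w,\alpha^+)+d(w,\alpha^-)}$. Each formula $\Phi$ is assigned $[\Phi]\subseteq W$: $[(\alpha,c)]$ is the set of worlds at which $\alpha$ holds to degree $c$, and $\land,\lor,\lnot$ are interpreted by $\cap,\cup$, complement in $W$. An evaluation satisfies $\Phi$ iff $[\Phi]=W$. A theory is a set of formulas; it is correct if some evaluation satisfies all its elements, and a correct theory $\mathcal T$ entails $\Phi$ if every evaluation satisfying all elements of $\mathcal T$ satisfies $\Phi$. *)

From Stdlib Require Import Reals.
Open Scope R_scope.

(** Worlds of W = [0,1]^n are represented by functions nat -> R whose
    coordinates 0..n-1 lie in [0,1] and which vanish from index n on
    (coordinate i here is c_{i+1} of the paper). *)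
Definition world := nat -> R.
Definition wset := world -> Prop.

Definition inW (n : nat) (w : world) : Prop :=
  (forall i, (i < n)%nat -> 0 <= w i <= 1) /\ (forall i, (n <= i)%nat -> w i = 0).

Fixpoint sumR (n : nat) (f : nat -> R) : R :=
  match n with O => 0 | S m => sumR m f + f m end.

Definition dist (n : nat) (w v : world) : R := sumR n (fun i => Rabs (w i - v i)).

Definition is_glb (E : R -> Prop) (m : R) : Prop :=
  (forall x, E x -> m <= x) /\ (forall b, (forall x, E x -> b <= x) -> b <= m).

Definition is_dist_set (n : nat) (A : wset) (w : world) (r : R) : Prop :=
  is_glb (fun x => exists a, A a /\ x = dist n w a) r.

Definition closedW (n : nat) (A : wset) : Prop :=
  (forall w, A w -> inW n w) /\
  (forall w, inW n w ->
     (forall eps, 0 < eps -> exists a, A a /\ dist n w a < eps) -> A w).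

Definition admissible (n : nat) (P M : wset) : Prop :=
  closedW n P /\ closedW n M /\ (exists w, P w) /\ (exists w, M w) /\
  (forall w, P w -> M w -> False).

(** Variables: basic phi_(i+1) = Basic i (i < n), dependent alpha_k = Dep k. *)
Inductive var : Type := Basic (i : nat) | Dep (k : nat).

(** An evaluation: the values of the dependent variables, each admissible;
    the basic variables have their fixed values (see [vplus], [vminus]). *)
Record evaluation (n : nat) : Type := mkEval {
  dep_val : nat -> wset * wset;
  dep_adm : forall k, admissible n (fst (dep_val k)) (snd (dep_val k)) }.

Definition vplus (n : nat) (ev : evaluation n) (v : var) : wset :=
  match v with
  | Basic i => fun w => inW n w /\ w i = 1
  | Dep k => fst (dep_val n ev k)
  end.
Definition vminus (n : nat) (ev : evaluation n) (v : var) : wset :=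
  match v with
  | Basic i => fun w => inW n w /\ w i = 0
  | Dep k => snd (dep_val n ev k)
  end.

Definition holds_deg (n : nat) (ev : evaluation n) (v : var) (w : world) (c : R) : Prop :=
  exists a b, is_dist_set n (vplus n ev v) w a /\ is_dist_set n (vminus n ev v) w b /\
              c = b / (a + b).

Inductive form : Type :=
  | GV (v : var) (c : R)
  | FAnd (A B : form)
  | FOr (A B : form)
  | FNot (A : form).

Definition FImp (A B : form) : form := FOr (FNot A) B.
Definition FIff (A B : form) : form := FAnd (FImp A B) (FImp B A).

(** BigAnd m f = f 0 /\ ... /\ f (m-1)  (intended for m >= 1) *)
Fixpoint BigAnd (m : nat) (f : nat -> form) : form :=
  match m with
  | O => f O
  | S O => f O
  | S (S _ as k) => FAnd (BigAnd k f) (f k)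
  end.

Fixpoint den (n : nat) (ev : evaluation n) (F : form) : wset :=
  match F with
  | GV v c => fun w => inW n w /\ holds_deg n ev v w c
  | FAnd A B => fun w => den n ev A w /\ den n ev B w
  | FOr A B => fun w => den n ev A w \/ den n ev B w
  | FNot A => fun w => inW n w /\ ~ den n ev A w
  end.

Definition satisfies (n : nat) (ev : evaluation n) (F : form) : Prop :=
  forall w, inW n w -> den n ev F w.

Definition satisfies_all (n : nat) (ev : evaluation n) (T : form -> Prop) : Prop :=
  forall F, T F -> satisfies n ev F.

Definition correct (n : nat) (T : form -> Prop) : Prop :=
  exists ev : evaluation n, satisfies_all n ev T.

(** entailment is only defined for correct theories *)
Definition entails (n : nat) (T : form -> Prop) (F : form) : Prop :=
  correct n T /\ forall ev : evaluation n, satisfies_all n ev T -> satisfies n ev F.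

Definition theoryT (n k : nat) : form -> Prop :=
  fun F => F = FIff (GV (Dep k) 1) (BigAnd n (fun i => GV (Basic i) 1)) \/
           F = FIff (GV (Dep k) 0) (BigAnd n (fun i => GV (Basic i) 0)).

(** For any
    admissible pair (P, M) the degree is 1 exactly on P and 0 exactly on M, since
    d(w, A) = 0 characterises membership in a closed set A and P, M are disjoint;
    so the theory pins down delta^+ and delta^- as the two corners.  The distance
    from w to the corner (v,...,v) is sum_i |c_i - v|, so the degree of delta is
    sum_i c_i / (sum_i (1 - c_i) + sum_i c_i) = (c_1 + ... + c_n) / n.  The
    evaluation taking both corners as the value of every dependent variable shows
    that the theory is correct. *)

From Pilot Require Import Defs.
From Stdlib Require Import Reals Lra Lia Classical.
Open Scope R_scope.

Lemma sumR_ext n f g :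
  (forall i, (i < n)%nat -> f i = g i) -> sumR n f = sumR n g.
Proof.
  induction n as [|n IH]; intros H; simpl; [reflexivity|].
  rewrite IH by (intros; apply H; lia). rewrite H by lia. reflexivity.
Qed.

Lemma sumR_nonneg n f :
  (forall i, (i < n)%nat -> 0 <= f i) -> 0 <= sumR n f.
Proof.
  induction n as [|n IH]; intros H; simpl; [lra|].
  assert (0 <= f n) by (apply H; lia).
  assert (0 <= sumR n f) by (apply IH; intros; apply H; lia). lra.
Qed.

Lemma term_le_sumR n f i :
  (forall j, (j < n)%nat -> 0 <= f j) -> (i < n)%nat -> f i <= sumR n f.
Proof.
  induction n as [|n IH]; intros H Hi; simpl; [lia|].
  assert (0 <= sumR n f) by (apply sumR_nonneg; intros; apply H; lia).
  destruct (Nat.eq_dec i n) as [->|Hne]; [lra|].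
  assert (f i <= sumR n f) by (apply IH; [intros; apply H|]; lia).
  assert (0 <= f n) by (apply H; lia). lra.
Qed.

Lemma sumR_plus n f g : sumR n (fun i => f i + g i) = sumR n f + sumR n g.
Proof. induction n as [|n IH]; simpl; [lra|]. rewrite IH; ring. Qed.

Lemma sumR_const n c : sumR n (fun _ => c) = INR n * c.
Proof. induction n as [|n IH]; simpl sumR; [simpl; ring|]. rewrite IH, S_INR; ring. Qed.

Lemma sumR_delta n f i :
  (i < n)%nat -> (forall j, (j < n)%nat -> j <> i -> f j = 0) -> sumR n f = f i.
Proof.
  induction n as [|n IH]; intros Hi H; simpl; [lia|].
  destruct (Nat.eq_dec i n) as [->|Hne].
  - rewrite (sumR_ext n f (fun _ => 0)), sumR_const by (intros; apply H; lia). ring.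
  - rewrite IH, (H n) by (intros; try apply H; lia). ring.
Qed.

Lemma dist_nonneg n w a : 0 <= Defs.dist n w a.
Proof. apply sumR_nonneg. intros; apply Rabs_pos. Qed.

Lemma dist_diag n w : Defs.dist n w w = 0.
Proof.
  unfold Defs.dist. rewrite (sumR_ext n _ (fun _ => 0)), sumR_const; [ring|].
  intros. rewrite Rminus_diag. apply Rabs_R0.
Qed.

Lemma coord_le_dist n w a i : (i < n)%nat -> Rabs (w i - a i) <= Defs.dist n w a.
Proof.
  intros Hi. apply (term_le_sumR n (fun j => Rabs (w j - a j))); auto.
  intros; apply Rabs_pos.
Qed.

Lemma is_glb_unique E m m' : is_glb E m -> is_glb E m' -> m = m'.
Proof. intros [H1 H1'] [H2 H2']. apply Rle_antisym; auto. Qed.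

Lemma is_dist_set_nonneg n A w r : is_dist_set n A w r -> 0 <= r.
Proof. intros [_ H]. apply H. intros x [a [_ ->]]. apply dist_nonneg. Qed.

Lemma is_dist_set_exists n (A : wset) w :
  (exists a, A a) -> exists r, is_dist_set n A w r.
Proof.
  intros [a0 Ha0].
  destruct (completeness (fun y => exists a, A a /\ y = - Defs.dist n w a))
    as [m [Hub Hlub]].
  - exists 0. intros y [a [_ ->]]. pose proof (dist_nonneg n w a). lra.
  - exists (- Defs.dist n w a0). eauto.
  - exists (- m). split.
    + intros x [a [Ha ->]].
      assert (- Defs.dist n w a <= m) by (apply Hub; eauto). lra.
    + intros b Hb. assert (m <= - b); [|lra].
      apply Hlub. intros y [a [Ha ->]].
      assert (b <= Defs.dist n w a) by (apply Hb; eauto). lra.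
Qed.

Lemma is_dist_set_mem n (A : wset) w : A w -> is_dist_set n A w 0.
Proof.
  intros Hw. split.
  - intros x [a [_ ->]]. apply dist_nonneg.
  - intros b Hb. rewrite <- (dist_diag n w). apply Hb. eauto.
Qed.

Lemma mem_of_is_dist_set0 n A w :
  closedW n A -> inW n w -> is_dist_set n A w 0 -> A w.
Proof.
  intros [_ Hcl] Hw [_ Hglb]. apply Hcl; auto. intros eps Heps.
  apply NNPP. intros Hfar. assert (eps <= 0); [|lra].
  apply Hglb. intros x [a [Ha ->]].
  apply Rnot_lt_le. intros Hlt. apply Hfar. eauto.
Qed.

Lemma is_dist_set_agree n (A : wset) p w :
  A p -> (forall a, A a -> forall i, (i < n)%nat -> a i = p i) ->
  is_dist_set n A w (Defs.dist n w p).
Proof.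
  intros Hp Hagree. split.
  - intros x [a [Ha ->]]. right. apply sumR_ext. intros i Hi.
    rewrite (Hagree a Ha i Hi). reflexivity.
  - intros b Hb. apply Hb. eauto.
Qed.

Lemma is_dist_set_coord n i v w :
  (i < n)%nat -> 0 <= v <= 1 -> inW n w ->
  is_dist_set n (fun a => inW n a /\ a i = v) w (Rabs (w i - v)).
Proof.
  intros Hi Hv [Hw Hw0]. split.
  - intros x [a [[_ <-] ->]]. apply coord_le_dist; auto.
  - intros b Hb. set (a := fun j => if Nat.eqb j i then v else w j).
    assert (Hai : a i = v) by (unfold a; rewrite Nat.eqb_refl; reflexivity).
    assert (Ha : inW n a).
    { split; intros j Hj; unfold a; destruct (Nat.eqb_spec j i); auto; lia. }
    replace (Rabs (w i - v)) with (Defs.dist n w a); [apply Hb; eauto|].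
    unfold Defs.dist. rewrite (sumR_delta n _ i), Hai; auto.
    intros j _ Hji. unfold a. apply Nat.eqb_neq in Hji. rewrite Hji, Rminus_diag.
    apply Rabs_R0.
Qed.

Lemma holds_deg_unique n ev v w c c' :
  holds_deg n ev v w c -> holds_deg n ev v w c' -> c = c'.
Proof.
  intros [a [b [Ha [Hb ->]]]] [a' [b' [Ha' [Hb' ->]]]].
  rewrite (is_glb_unique _ _ _ Ha Ha'), (is_glb_unique _ _ _ Hb Hb'). reflexivity.
Qed.

(* The case [a + b = 0] is excluded here by Rocq's junk value [b / 0 = 0]. *)
Lemma Rdiv_add_eq1 a b : 0 <= a -> 0 <= b -> b / (a + b) = 1 -> a = 0.
Proof.
  intros Ha Hb H. destruct (Req_dec (a + b) 0) as [Hz|Hnz].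
  - rewrite Hz, Rdiv_0_r in H. lra.
  - assert (b = a + b); [|lra].
    rewrite <- (Rmult_1_l (a + b)), <- H. field. exact Hnz.
Qed.

Lemma Rdiv_add_eq0 a b : 0 <= a -> 0 <= b -> b / (a + b) = 0 -> b = 0.
Proof.
  intros Ha Hb H. destruct (Req_dec (a + b) 0) as [Hz|Hnz]; [lra|].
  rewrite <- (Rmult_0_l (a + b)), <- H. field. exact Hnz.
Qed.

Section AdmissiblePair.

Variables (n : nat) (ev : evaluation n) (v : var).
Hypothesis adm : admissible n (vplus n ev v) (vminus n ev v).

Lemma holds_deg1_iff w : inW n w -> (holds_deg n ev v w 1 <-> vplus n ev v w).
Proof.
  destruct adm as [Hcp [Hcm [_ [Hnm Hdisj]]]]. intros Hw. split.
  - intros [a [b [Ha [Hb Hab]]]].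
    assert (a = 0) as ->.
    { apply (Rdiv_add_eq1 a b); eauto using is_dist_set_nonneg. }
    apply (mem_of_is_dist_set0 n); auto.
  - intros Hp. destruct (is_dist_set_exists n _ w Hnm) as [b Hb].
    assert (Hb0 : b <> 0).
    { intros ->. apply (Hdisj w Hp). apply (mem_of_is_dist_set0 n); auto. }
    exists 0, b. split; [apply is_dist_set_mem; auto|split; auto]. field. exact Hb0.
Qed.

Lemma holds_deg0_iff w : inW n w -> (holds_deg n ev v w 0 <-> vminus n ev v w).
Proof.
  destruct adm as [_ [Hcm [Hnp _]]]. intros Hw. split.
  - intros [a [b [Ha [Hb Hab]]]].
    assert (b = 0) as ->.
    { apply (Rdiv_add_eq0 a b); eauto using is_dist_set_nonneg. }
    apply (mem_of_is_dist_set0 n); auto.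
  - intros Hm. destruct (is_dist_set_exists n _ w Hnp) as [a Ha].
    exists a, 0. split; [auto|split; [apply is_dist_set_mem; auto|]]. unfold Rdiv; ring.
Qed.

End AdmissiblePair.

Lemma holds_deg_basic n ev i w :
  (i < n)%nat -> inW n w -> holds_deg n ev (Basic i) w (w i).
Proof.
  intros Hi Hw. pose proof (proj1 Hw i Hi) as Hwi.
  exists (Rabs (w i - 1)), (Rabs (w i - 0)).
  split; [apply (is_dist_set_coord n i 1); auto; lra|].
  split; [apply (is_dist_set_coord n i 0); auto; lra|].
  rewrite (Rabs_left1 (w i - 1)), (Rabs_right (w i - 0)) by lra. field; lra.
Qed.

Lemma den_FIff n ev A B w :
  inW n w -> (den n ev (FIff A B) w <-> (den n ev A w <-> den n ev B w)).
Proof.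
  intros Hw. unfold FIff, FImp; simpl.
  destruct (classic (den n ev A w)); destruct (classic (den n ev B w)); tauto.
Qed.

Lemma den_FImp n ev A B w :
  inW n w -> (den n ev (FImp A B) w <-> (den n ev A w -> den n ev B w)).
Proof.
  intros Hw. unfold FImp; simpl. destruct (classic (den n ev A w)); tauto.
Qed.

Lemma den_BigAnd n ev m f w :
  (1 <= m)%nat -> (den n ev (BigAnd m f) w <-> forall i, (i < m)%nat -> den n ev (f i) w).
Proof.
  induction m as [|[|m] IH]; intros Hm; [lia| |].
  - simpl. split; [intros H i Hi; replace i with 0%nat by lia; auto|intros H; apply H; lia].
  - change (den n ev (BigAnd (S m) f) w /\ den n ev (f (S m)) w <->
            forall i, (i < S (S m))%nat -> den n ev (f i) w).
    rewrite IH by lia. split.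
    + intros [H1 H2] i Hi. destruct (Nat.eq_dec i (S m)) as [->|]; auto. apply H1; lia.
    + intros H. split; [intros; apply H|apply H]; lia.
Qed.

Lemma den_BigAnd_basic n ev c w :
  (1 <= n)%nat -> inW n w ->
  (den n ev (BigAnd n (fun i => GV (Basic i) (c i))) w <-> forall i, (i < n)%nat -> w i = c i).
Proof.
  intros Hn Hw. rewrite den_BigAnd by auto. simpl. split.
  - intros H i Hi. apply (holds_deg_unique n ev (Basic i) w); [apply holds_deg_basic; auto|].
    apply H; auto.
  - intros H i Hi. split; auto. rewrite <- H by auto. apply holds_deg_basic; auto.
Qed.

Definition corner (n : nat) (v : R) : wset :=
  fun a => inW n a /\ forall i, (i < n)%nat -> a i = v.

Lemma corner_closed n v : closedW n (corner n v).
Proof.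
  split; [intros w [Hw _]; auto|].
  intros w Hw Hclose. split; auto. intros i Hi.
  destruct (Req_dec (w i) v) as [|Hne]; auto.
  assert (Hpos : 0 < Rabs (w i - v)) by (apply Rabs_pos_lt; lra).
  destruct (Hclose _ Hpos) as [a [[_ Ha] Hd]].
  pose proof (coord_le_dist n w a i Hi) as Hle. rewrite Ha in Hle by auto. lra.
Qed.

Lemma corner_mem n v : 0 <= v <= 1 -> corner n v (fun i => if Nat.ltb i n then v else 0).
Proof.
  intros Hv. split; [split|]; intros j Hj.
  all: destruct (Nat.ltb_spec j n); lia || lra.
Qed.

Lemma corners_admissible n : (1 <= n)%nat -> admissible n (corner n 1) (corner n 0).
Proof.
  intros Hn. split; [apply corner_closed|]. split; [apply corner_closed|].
  split; [eexists; apply corner_mem; lra|]. split; [eexists; apply corner_mem; lra|].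
  intros w [_ H1] [_ H0]. specialize (H1 0%nat ltac:(lia)). specialize (H0 0%nat ltac:(lia)).
  lra.
Qed.

Lemma is_dist_set_corner n (A : wset) v w :
  (forall a, A a <-> corner n v a) -> 0 <= v <= 1 ->
  is_dist_set n A w (sumR n (fun i => Rabs (w i - v))).
Proof.
  intros HA Hv. set (p := fun i => if Nat.ltb i n then v else 0).
  replace (sumR n (fun i => Rabs (w i - v))) with (Defs.dist n w p).
  - apply is_dist_set_agree; [apply HA, corner_mem; auto|].
    intros a Ha i Hi. apply HA in Ha as [_ Ha].
    unfold p. destruct (Nat.ltb_spec i n); auto; lia.
  - apply sumR_ext. intros i Hi. unfold p. destruct (Nat.ltb_spec i n); auto; lia.
Qed.

(* d(w, corner 1) + d(w, corner 0) = sum_i ((1 - c_i) + c_i) = n *)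
Lemma holds_deg_corners n ev v w :
  (forall a, vplus n ev v a <-> corner n 1 a) ->
  (forall a, vminus n ev v a <-> corner n 0 a) ->
  inW n w -> holds_deg n ev v w (sumR n w / INR n).
Proof.
  intros Hp Hm [Hw _].
  exists (sumR n (fun i => Rabs (w i - 1))), (sumR n (fun i => Rabs (w i - 0))).
  split; [apply is_dist_set_corner; auto; lra|].
  split; [apply is_dist_set_corner; auto; lra|].
  assert (Hsum : sumR n (fun i => Rabs (w i - 1)) + sumR n (fun i => Rabs (w i - 0)) = INR n).
  { rewrite <- sumR_plus, <- (Rmult_1_r (INR n)), <- sumR_const. apply sumR_ext.
    intros i Hi. specialize (Hw i Hi).
    rewrite (Rabs_left1 (w i - 1)), (Rabs_right (w i - 0)); lra. }
  rewrite Hsum. f_equal. apply sumR_ext. intros i Hi. specialize (Hw i Hi).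
  rewrite Rabs_right; lra.
Qed.

Definition corner_evaluation (n : nat) (hn : (1 <= n)%nat) : evaluation n :=
  mkEval n (fun _ => (corner n 1, corner n 0)) (fun _ => corners_admissible n hn).

Lemma satisfies_theoryT_iff n k ev :
  (1 <= n)%nat ->
  satisfies_all n ev (theoryT n k) <->
  (forall w, vplus n ev (Dep k) w <-> corner n 1 w) /\
  (forall w, vminus n ev (Dep k) w <-> corner n 0 w).
Proof.
  intros Hn. pose proof (dep_adm n ev k) as Hadm.
  assert (Hin : forall w, vplus n ev (Dep k) w \/ vminus n ev (Dep k) w -> inW n w)
    by (destruct Hadm as [[HP _] [[HM _] _]]; intros w [H|H]; [apply HP|apply HM]; exact H).
  assert (Hden : forall v w, inW n w ->
            den n ev (BigAnd n (fun i => GV (Basic i) v)) w <-> corner n v w).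
  { intros v w Hw. rewrite (den_BigAnd_basic n ev (fun _ => v)) by auto.
    unfold corner. tauto. }
  assert (Hplus : forall w, inW n w ->
            den n ev (FIff (GV (Dep k) 1) (BigAnd n (fun i => GV (Basic i) 1))) w <->
            (vplus n ev (Dep k) w <-> corner n 1 w)).
  { intros w Hw. rewrite den_FIff, Hden by auto. simpl den.
    rewrite (holds_deg1_iff n ev (Dep k)) by auto. tauto. }
  assert (Hminus : forall w, inW n w ->
            den n ev (FIff (GV (Dep k) 0) (BigAnd n (fun i => GV (Basic i) 0))) w <->
            (vminus n ev (Dep k) w <-> corner n 0 w)).
  { intros w Hw. rewrite den_FIff, Hden by auto. simpl den.
    rewrite (holds_deg0_iff n ev (Dep k)) by auto. tauto. }
  split.
  - intros Hsat. split; intros w.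
    all: destruct (classic (inW n w)) as [Hw|Hw];
      [| split; [intros H; contradict Hw; auto | intros [Hw' _]; contradiction]].
    + apply Hplus, Hsat; auto. left; reflexivity.
    + apply Hminus, Hsat; auto. right; reflexivity.
  - intros [Hp Hm] F [-> | ->] w Hw; [apply Hplus|apply Hminus]; auto.
Qed.

Theorem mainTheorem11 (n k : nat) (hn : (1 <= n)%nat) :
  (forall ev : evaluation n, satisfies_all n ev (theoryT n k) ->
     (forall w, vplus n ev (Dep k) w <-> (inW n w /\ forall i, (i < n)%nat -> w i = 1)) /\
     (forall w, vminus n ev (Dep k) w <-> (inW n w /\ forall i, (i < n)%nat -> w i = 0)) /\
     (forall w, inW n w -> holds_deg n ev (Dep k) w (sumR n w / INR n))) /\
  (forall c : nat -> R, (forall i, (i < n)%nat -> 0 <= c i <= 1) ->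
     entails n (theoryT n k)
       (FImp (BigAnd n (fun i => GV (Basic i) (c i)))
             (GV (Dep k) (sumR n c / INR n)))).
Proof.
  split.
  - intros ev Hsat. apply satisfies_theoryT_iff in Hsat as [Hp Hm]; auto.
    split; [exact Hp|split; [exact Hm|]].
    intros w Hw. apply holds_deg_corners; auto.
  - intros c _. split.
    + exists (corner_evaluation n hn). apply satisfies_theoryT_iff; auto.
      split; intros w; reflexivity.
    + intros ev Hsat w Hw.
      apply satisfies_theoryT_iff in Hsat as [Hp Hm]; auto.
      rewrite den_FImp, den_BigAnd_basic by auto. intros Hwc. split; auto.
      rewrite <- (sumR_ext n w c Hwc). apply holds_deg_corners; auto.
Qed.
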